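(* Let $(\Omega,\mathcal F,\mu)$ be a measure space and $p\in[1,\infty)$. If $\mathscr A\subset L^p(\Omega,\mathcal F,\mu)$ is uniformly integrable, then $\mathscr A$ is uniformly approximable.
   Context: All measures are assumed not identically zero. $\mathscr A\subset L^p$ is uniformly integrable if $\inf_{g\in L^p_+}\sup_{f\in\mathscr A}\int_{\{|f|>g\}}|f|^p\,d\mu=0$, where $L^p_+$ is the set of nonnegative functions in $L^p$. $\mathscr G_{p,k}$ is the set of functions $\sum_{i=1}^l a_i\mathbf 1_{A_i}\in L^p$ with $l\le k$, $\{A_i\}$ a measurable partition of $\Omega$, $a_i\in\mathbb R$. $N_{p,\varepsilon}(\mathscr A)=\inf\{k\ge1:\ \forall f\in\mathscr A\ \exists h\in\mathscr G_{p,k},\ \|f-h\|_p\le\varepsilon\}$ ($\inf\emptyset=\infty$); $\mathscr A$ is uniformly approximable if $N_{p,\varepsilon}(\mathscr A)<\infty$ for every $\varepsilon>0$. *)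

From HB Require Import structures.
From mathcomp Require Import all_boot all_order all_algebra.
From mathcomp Require Import all_classical all_reals all_analysis.
Set Implicit Arguments. Unset Strict Implicit. Unset Printing Implicit Defensive.
Import Order.TTheory GRing.Theory Num.Theory.
Local Open Scope classical_set_scope.
Local Open Scope ring_scope.

(* L^p is represented at the level of functions: f \in Lfun mu p%:E means f is
   measurable with finite Lp-norm (hoelder.v). *)

Definition Lp_plus d (T : measurableType d) (R : realType)
  (mu : {measure set T -> \bar R}) (p : R) : set (T -> R) :=
  [set g | g \in Lfun mu p%:E /\ forall x, 0 <= g x].

Definition uniformly_integrable d (T : measurableType d) (R : realType)
  (mu : {measure set T -> \bar R}) (p : R) (A : set (T -> R)) : Prop :=
  ereal_inf [set ereal_sup
               [set (\int[mu]_(x in [set y | (g y < `|f y|)%R]) ((`|f x| `^ p)%R)%:E)%E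
               | f in A]
            | g in Lp_plus mu p] = 0%E.

Definition G_pk d (T : measurableType d) (R : realType)
  (mu : {measure set T -> \bar R}) (p : R) (k : nat) : set (T -> R) :=
  [set h | h \in Lfun mu p%:E /\
     exists (l : nat) (a : 'I_l -> R) (B : 'I_l -> set T),
       (l <= k)%N /\
       (forall i, measurable (B i)) /\
       (forall i j, i != j -> B i `&` B j = set0) /\
       (forall x, exists i, B i x) /\
       h = (fun x => \sum_(i < l) a i * \1_(B i) x)].

(* N_{p,eps}(A) < oo, i.e. the set of admissible k >= 1 is nonempty *)
Definition N_finite d (T : measurableType d) (R : realType)
  (mu : {measure set T -> \bar R}) (p : R) (eps : R) (A : set (T -> R)) : Prop :=
  exists k : nat, (1 <= k)%N /\
    forall f, A f -> exists h, G_pk mu p k h /\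
      (Lnorm mu p%:E (fun x => (f x - h x)%:E) <= eps%:E)%E.

Definition uniformly_approximable d (T : measurableType d) (R : realType)
  (mu : {measure set T -> \bar R}) (p : R) (A : set (T -> R)) : Prop :=
  forall eps : R, 0 < eps -> N_finite mu p eps A.

From HB Require Import structures.
From mathcomp Require Import all_boot all_order all_algebra.
From mathcomp Require Import all_classical all_reals all_analysis.
From mathcomp Require Import zify lra ring.
From mathcomp Require Import measurable_realfun.
Import Order.TTheory GRing.Theory Num.Theory.
Local Open Scope classical_set_scope.
Local Open Scope ring_scope.

(* Uniform integrability provides one gauge g in L^p_+ such that every f in A
   has at most eps^p/4 of its p-th power mass on {|f| > g}; dominated
   convergence then gives a band delta < g <= M outside of which g^p has mass
   at most eps^p/4.  On the set where g lies in the band and |f| <= g, round f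
   down to the grid eta Z, with eta = t delta, and set the approximant to 0
   elsewhere.  Since |f| <= M there, the approximant takes one of
   2 (floor (M / eta) + 1) values whatever f is, and the rounding error
   eta <= t g contributes at most t^p \int g^p <= eps^p/4. *)

Section quantization.
Context {R : realType}.
Implicit Types (eta y M : R) (N : nat).

Definition quantize eta y : R := eta * (Num.floor (y / eta))%:~R.

Lemma quantize_gap eta y : 0 < eta -> 0 <= y - quantize eta y < eta.
Proof.
move=> eta0; have yE : y = eta * (y / eta) by rewrite mulrC divfK ?gt_eqF.
rewrite /quantize [X in X - _]yE -mulrBr; apply/andP; split.
  by rewrite mulr_ge0 ?subr_ge0 ?Num.Theory.floor_le// ltW.
rewrite -[X in _ < X]mulr1 ltr_pM2l // ltrBlDl.
by have := Num.Theory.floorD1_gt (y / eta); rewrite intrD.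
Qed.

Lemma nondecreasing_quantize eta : 0 < eta -> {homo quantize eta : x y / x <= y}.
Proof.
move=> eta0 x y xy; rewrite ler_pM2l // ler_int Num.Theory.le_floor //.
by rewrite ler_pM2r // invr_gt0.
Qed.

Lemma quantize_floor_bounds eta M N y : 0 < eta -> M / eta < N.+1%:R -> `|y| <= M ->
  (- (N.+1)%:Z <= Num.floor (y / eta))%R /\ (Num.floor (y / eta) <= N%:Z)%R.
Proof.
move=> eta0 MN; rewrite ler_norml => /andP[My yM]; split.
  rewrite Num.Theory.floor_ge_int mulrNz ler_pdivlMr // mulNr.
  apply: le_trans My; rewrite lerN2 -ler_pdivrMr //.
  by apply: ltW; rewrite -[(N.+1)%:Z%:~R]/(N.+1%:R).
have : (Num.floor (y / eta) < N.+1%:Z)%R.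
  rewrite Num.Theory.floor_lt_int; apply: le_lt_trans MN.
  by rewrite ler_pM2r ?invr_gt0.
lia.
Qed.

Definition grid eta N : seq R :=
  [seq eta * (i%:Z - N.+1%:Z)%:~R | i <- iota 0 (N.+1 + N.+1)].

Lemma size_grid eta N : size (grid eta N) = (N.+1 + N.+1)%N.
Proof. by rewrite size_map size_iota. Qed.

Lemma uniq_grid eta N : eta != 0 -> uniq (grid eta N).
Proof.
move=> eta0; rewrite map_inj_in_uniq ?iota_uniq // => i j _ _.
by move=> /(mulfI eta0) /intr_inj /addIr [].
Qed.

Lemma mem_grid eta N (k : int) : (- (N.+1)%:Z <= k)%R -> (k <= N%:Z)%R ->
  eta * k%:~R \in grid eta N.
Proof.
move=> k1 k2; apply/mapP; exists (absz (k + (N.+1)%:Z)%R).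
  by rewrite mem_iota; lia.
by congr (_ * _%:~R); lia.
Qed.

Lemma quantize_in_grid eta M N y : 0 < eta -> M / eta < N.+1%:R -> `|y| <= M ->
  quantize eta y \in grid eta N.
Proof.
move=> eta0 MN yM; have [] := quantize_floor_bounds eta M N y eta0 MN yM.
exact: mem_grid.
Qed.

Lemma zero_in_grid eta N : 0 \in grid eta N.
Proof. by have := @mem_grid eta N 0%R; rewrite mulr0; apply; rewrite ?oppr_le0. Qed.

End quantization.

Section Lp_functions.
Context {d} {T : measurableType d} {R : realType}.
Variable mu : {measure set T -> \bar R}.

Lemma measurable_Lfun {p : \bar R} {f : T -> R} :
  f \in Lfun mu p -> measurable_fun setT f.
Proof. by rewrite inE => /andP[/[!inE]]. Qed.

Lemma finite_range_partition (h : T -> R) (V : seq R) :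
  measurable_fun setT h -> uniq V -> (forall x, h x \in V) ->
  exists (a : 'I_(size V) -> R) (B : 'I_(size V) -> set T),
   (forall i, measurable (B i)) /\
   (forall i j, i != j -> B i `&` B j = set0) /\
   (forall x, exists i, B i x) /\
   h = (fun x => \sum_(i < size V) a i * \1_(B i) x).
Proof.
move=> mh uV hV.
have idx x : (index (h x) V < size V)%N by rewrite index_mem.
exists (fun i => nth 0 V i), (fun i => h @^-1` [set nth 0 V i]).
split; [|split; [|split]].
- by move=> i; rewrite -[X in measurable X]setTI; exact: mh.
- move=> i j ij; apply/seteqP; split => [x /= [hi hj]|//].
  move/eqP: ij; apply; apply: val_inj; apply/eqP.
  by rewrite -(nth_uniq 0 _ _ uV) ?ltn_ord// -hi -hj.
- by move=> x; exists (Ordinal (idx x)); rewrite /= nth_index.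
- apply/funext => x; rewrite (bigD1 (Ordinal (idx x))) //= big1 => [|j jx].
    by rewrite indicE mem_set ?nth_index// mulr1 addr0.
  rewrite indicE memNset ?mulr0// => /= hj.
  by move/eqP: jx; apply; apply: val_inj; rewrite /= hj index_uniq.
Qed.

Lemma G_pk_finite_range p k (h : T -> R) (V : seq R) :
  h \in Lfun mu p%:E -> uniq V -> (size V <= k)%N -> (forall x, h x \in V) ->
  G_pk mu p k h.
Proof.
move=> hL uV Vk hV; split => //; exists (size V).
have [a [B [mB [dB [cB ->]]]]] := finite_range_partition h V (measurable_Lfun hL) uV hV.
by exists a, B.
Qed.

Lemma Lnorm_le_powR (F : T -> R) p eps : 0 < p -> 0 <= eps ->
  (\int[mu]_x (`|F x| `^ p)%:E <= (eps `^ p)%:E)%E ->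
  (Lnorm mu p%:E (fun x => (F x)%:E) <= eps%:E)%E.
Proof.
move=> p0 eps0 Fp; rewrite unlock /=.
set I := (\int[mu]_x _)%E.
have I0 : (0 <= I)%E by apply: integral_ge0 => x _; rewrite lee_fin powR_ge0.
have If : I \is a fin_num by rewrite ge0_fin_numE // (le_lt_trans Fp) ?ltry.
rewrite -(fineK If) poweR_EFin lee_fin.
have -> : eps = (eps `^ p) `^ p^-1 by rewrite -powRrM mulfV ?gt_eqF // powRr1.
apply: ge0_ler_powR; rewrite ?nnegrE ?invr_ge0 ?fine_ge0 ?powR_ge0 ?(ltW p0) //.
by rewrite -lee_fin fineK.
Qed.

Lemma Lfun_dominated (h g : T -> R) p c : 1 <= p -> 0 <= c ->
  measurable_fun setT h -> g \in Lfun mu p%:E -> (forall x, `|h x| <= c * `|g x|) ->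
  h \in Lfun mu p%:E.
Proof.
move=> p1 c0 mh gL hg; have p0 : 0 < p by rewrite (lt_le_trans ltr01).
have /integrableP[mgp gp_fin] := Lfun_integrable p1 gL.
rewrite inE; apply/andP; split; rewrite inE /=; first exact: mh.
rewrite /finite_norm unlock poweR_lty //=.
apply: (@le_lt_trans _ _ (\int[mu]_x ((c `^ p)%:E * (`|g x| `^ p)%:E))%E).
  apply: ge0_le_integral => //.
  - apply/measurable_EFinP; apply: measurableT_comp (measurable_powR p) _.
    exact: measurableT_comp.
  - exact: emeasurable_funM (measurable_cst _) mgp.
  - move=> x _; rewrite -EFinM lee_fin -powRM //.
    by apply: ge0_ler_powR; rewrite ?nnegrE ?mulr_ge0 ?(ltW p0).
rewrite ge0_integralZl_EFin ?powR_ge0 //.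
move: gp_fin; under eq_integral => x _ do rewrite gee0_abs ?lee_fin ?powR_ge0//.
by move=> gp_fin; rewrite lte_mul_pinfty ?lee_fin ?powR_ge0.
Qed.

End Lp_functions.

Section uniform_integrability.
Context {d} {T : measurableType d} {R : realType}.
Variables (mu : {measure set T -> \bar R}) (p : R).

Lemma uniformly_integrable_gauge (A : set (T -> R)) (gam : R) :
  uniformly_integrable mu p A -> 0 < gam ->
  exists2 g, Lp_plus mu p g & forall f, A f ->
    (\int[mu]_(x in [set y | (g y < `|f y|)%R]) (`|f x| `^ p)%:E <= gam%:E)%E.
Proof.
rewrite /uniformly_integrable => UI gam0.
have : (0 < gam%:E)%E by rewrite lte_fin.
rewrite -[X in (X < _)%E]UI => /ereal_inf_lt[_ [g gLp <-] sup_lt].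
exists g => // f Af; apply: le_trans (ltW sup_lt).
by apply: ereal_sup_ubound; exists f.
Qed.

Lemma integrable_Lp_plus_powR (g : T -> R) : 1 <= p -> Lp_plus mu p g ->
  mu.-integrable setT (fun x => (g x `^ p)%:E).
Proof.
move=> p1 [gL g0]; apply: eq_integrable (Lfun_integrable p1 gL) => // x _.
by rewrite ger0_norm.
Qed.

Definition off_band (g : T -> R) (delta M : R) : set T :=
  [set x | (g x <= delta) || (M < g x)].

Lemma measurable_off_band (g : T -> R) delta M :
  measurable_fun setT g -> measurable (off_band g delta M).
Proof.
move=> mg; rewrite -[X in measurable X]setTI; apply: (measurable_or _ _) => //.
- by apply: measurable_fun_ler; [exact: mg|exact: measurable_cst].
- by apply: measurable_fun_ltr; [exact: measurable_cst|exact: mg].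
Qed.

Lemma off_band_powR_eventually0 (g : T -> R) x : 0 < p -> 0 <= g x ->
  \forall n \near \oo, g x `^ p * \1_(off_band g n.+1%:R^-1 n.+1%:R) x = 0.
Proof.
move=> p0 gx0; have [->|gx_neq0] := eqVneq (g x) 0.
  by apply: nearW => n; rewrite powR0 ?gt_eqF // mul0r.
have gxp : 0 < g x by rewrite lt_def gx_neq0.
exists (Num.truncn (g x + (g x)^-1)) => // n /= big_n.
have gx_lt : g x + (g x)^-1 < n.+1%:R.
  apply: lt_le_trans (Num.Theory.real_truncnS_gt (num_real _)) _.
  by rewrite ler_nat.
rewrite indicE memNset ?mulr0 //=; apply/negP.
rewrite negb_or -ltNge -leNgt; apply/andP; split.
  by rewrite invf_plt ?posrE // (le_lt_trans _ gx_lt) // lerDr ltW.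
by rewrite ltW // (le_lt_trans _ gx_lt) // lerDl ltW // invr_gt0.
Qed.

Lemma integral_off_band_small (g : T -> R) gam : 1 <= p -> 0 < gam ->
  Lp_plus mu p g -> exists n : nat,
  (\int[mu]_x (g x `^ p * \1_(off_band g n.+1%:R^-1 n.+1%:R) x)%:E < gam%:E)%E.
Proof.
move=> p1 gam0 gLp; have p0 : 0 < p by rewrite (lt_le_trans ltr01).
have [gL g0] := gLp; have mg := measurable_Lfun mu gL.
have ig := integrable_Lp_plus_powR g p1 gLp.
pose F n x := (g x `^ p * \1_(off_band g n.+1%:R^-1 n.+1%:R) x)%:E.
have mF n : measurable_fun setT (F n).
  apply/measurable_EFinP; apply: measurable_funM.
    exact: measurableT_comp (measurable_powR p) mg.
  by apply: measurable_indic; exact: measurable_off_band.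
have F0 : {ae mu, forall x, setT x -> F ^~ x @ \oo --> (cst 0%E : T -> \bar R) x}.
  apply: aeW => x _; apply: cvg_near_cst.
  by apply: filterS (off_band_powR_eventually0 g x p0 (g0 x)) => n; rewrite /F => ->.
have Fg : {ae mu, forall x n, setT x -> (`|F n x| <= (g x `^ p)%:E)%E}.
  apply: aeW => x n _; rewrite abse_EFin lee_fin ger0_norm ?mulr_ge0 ?powR_ge0 //.
  by rewrite ler_piMr ?powR_ge0 // indicE; case: (_ \in _).
have [_ _] := dominated_convergence measurableT mF (measurable_cst _) F0 ig Fg.
rewrite integral0 => cvgF; apply: contrapT => /forallNP Fgam.
suff : (gam%:E <= 0)%E by rewrite lee_fin leNgt gam0.
by apply: cvge_ge cvgF; apply: nearW => n; rewrite leNgt; apply/negP/Fgam.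
Qed.

End uniform_integrability.

Section band_quantization.
Context {d} {T : measurableType d} {R : realType}.
Variables (mu : {measure set T -> \bar R}) (p : R) (g f : T -> R) (delta M eta : R).
Hypotheses (p0 : 0 < p) (delta0 : 0 < delta) (eta0 : 0 < eta)
  (g0 : forall x, 0 <= g x) (mg : measurable_fun setT g) (mf : measurable_fun setT f).

Definition in_band x := (delta < g x) && (g x <= M) && (`|f x| <= g x).

Definition band_quantization x : R := if in_band x then quantize eta (f x) else 0.

Let h := band_quantization.
Let U := [set x | g x < `|f x|].
Let ratio_ge0 : 0 <= eta / delta := divr_ge0 (ltW eta0) (ltW delta0).

Lemma measurable_band_quantization : measurable_fun setT h.
Proof.
apply: measurable_fun_ifT.
- apply: measurable_and; first apply: measurable_and.
  + by apply: measurable_fun_ltr; [exact: measurable_cst|exact: mg].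
  + by apply: measurable_fun_ler; [exact: mg|exact: measurable_cst].
  + by apply: measurable_fun_ler; [exact: measurableT_comp|exact: mg].
- apply: measurableT_comp mf.
  by apply: nondecreasing_measurable => //; exact: nondecreasing_quantize.
- exact: measurable_cst.
Qed.

Lemma band_quantization_in_grid N x : M / eta < N.+1%:R -> h x \in grid eta N.
Proof.
rewrite /h /band_quantization; case: ifP => [/andP[/andP[_ gM] fg] MN|_ _].
  by apply: quantize_in_grid MN (le_trans fg gM).
exact: zero_in_grid.
Qed.

Lemma band_quantization_error x : in_band x -> `|f x - h x| <= eta / delta * g x.
Proof.
rewrite /h /band_quantization => bx; rewrite bx.
have /andP[/andP[dg _] _] := bx; have /andP[q0 q_eta] := quantize_gap eta (f x) eta0.
rewrite ger0_norm // (le_trans (ltW q_eta)) // -ler_pdivrMl ?divr_gt0 //.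
by rewrite invf_div divfK ?gt_eqF // ltW.
Qed.

Lemma band_quantization_le x : `|h x| <= (1 + eta / delta) * `|g x|.
Proof.
have [bx|nbx] := boolP (in_band x); last first.
  by rewrite /h /band_quantization (negbTE nbx) normr0 mulr_ge0 ?addr_ge0.
have /andP[_ fg] := bx; have err := band_quantization_error x bx.
rewrite (ger0_norm (g0 x)) mulrDl mul1r (_ : h x = f x - (f x - h x)); last by ring.
by rewrite (le_trans (ler_normB _ _)) // lerD.
Qed.

Lemma band_quantization_error_powR x :
  `|f x - h x| `^ p <= (eta / delta) `^ p * g x `^ p + `|f x| `^ p * \1_U x
                       + g x `^ p * \1_(off_band g delta M) x.
Proof.
have i0 (S : set T) : 0 <= \1_S x :> R by rewrite indicE; case: (_ \in _).
have e0 := powR_ge0 (eta / delta) p; have gp0 := powR_ge0 (g x) p.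
have fp0 := powR_ge0 `|f x| p.
have le1 := mulr_ge0 e0 gp0; have le2 := mulr_ge0 fp0 (i0 U).
have le3 := mulr_ge0 gp0 (i0 (off_band g delta M)).
have [bx|nbx] := boolP (in_band x).
  suff : `|f x - h x| `^ p <= (eta / delta) `^ p * g x `^ p by lra.
  rewrite -powRM //; apply: ge0_ler_powR;
    rewrite ?nnegrE ?(ltW p0) ?(mulr_ge0 ratio_ge0) //.
  exact: band_quantization_error.
rewrite /h /band_quantization (negbTE nbx) subr0.
have [gf|fg] := ltrP (g x) `|f x|.
  by rewrite indicE mem_set //= mulr1 in le2 *; lra.
have bad : off_band g delta M x.
  by move: nbx; rewrite /in_band fg andbT negb_and -ltNge -leNgt.
rewrite indicE mem_set //= mulr1 in le3 *.
suff : `|f x| `^ p <= g x `^ p by lra.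
by apply: ge0_ler_powR; rewrite ?nnegrE ?(ltW p0).
Qed.

Lemma band_quantization_Lfun : 1 <= p -> g \in Lfun mu p%:E -> h \in Lfun mu p%:E.
Proof.
move=> p1 gL; apply: (Lfun_dominated _ _ g _ (1 + eta / delta)) => //.
- by rewrite addr_ge0.
- exact: measurable_band_quantization.
- exact: band_quantization_le.
Qed.

Lemma G_pk_band_quantization N : 1 <= p -> g \in Lfun mu p%:E -> M / eta < N.+1%:R ->
  G_pk mu p (size (grid eta N)) h.
Proof.
move=> p1 gL MN; apply: (G_pk_finite_range _ _ _ _ (grid eta N)) => //.
- exact: band_quantization_Lfun.
- exact/uniq_grid/lt0r_neq0.
- by move=> x; apply: band_quantization_in_grid.
Qed.

Lemma integral_band_quantization_error :
  (\int[mu]_x (`|f x - h x| `^ p)%:E <=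
   ((eta / delta) `^ p)%:E * \int[mu]_x (g x `^ p)%:E
   + \int[mu]_(x in U) (`|f x| `^ p)%:E
   + \int[mu]_x (g x `^ p * \1_(off_band g delta M) x)%:E)%E.
Proof.
have i0 (S : set T) x : 0 <= \1_S x :> R by rewrite indicE; case: (_ \in _).
have mU : measurable U.
  rewrite -[X in measurable X]setTI; apply: measurable_fun_ltr => //.
  exact: measurableT_comp.
have mpow (F : T -> R) : measurable_fun setT F ->
    measurable_fun setT (fun x => F x `^ p).
  by move=> mF; exact: measurableT_comp (measurable_powR p) mF.
pose e1 x := ((eta / delta) `^ p * g x `^ p)%:E.
pose e2 x := (`|f x| `^ p * \1_U x)%:E.
pose e3 x := (g x `^ p * \1_(off_band g delta M) x)%:E.
have m1 : measurable_fun setT e1 by apply/measurable_EFinP/measurable_funM; [|exact: mpow].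
have m2 : measurable_fun setT e2.
  apply/measurable_EFinP/measurable_funM; first exact/mpow/measurableT_comp.
  exact: measurable_indic.
have m3 : measurable_fun setT e3.
  apply/measurable_EFinP/measurable_funM; first exact: mpow.
  exact/measurable_indic/measurable_off_band.
have n1 x : setT x -> (0 <= e1 x)%E by rewrite lee_fin mulr_ge0 ?powR_ge0.
have n2 x : setT x -> (0 <= e2 x)%E by rewrite lee_fin mulr_ge0 ?powR_ge0.
have n3 x : setT x -> (0 <= e3 x)%E by rewrite lee_fin mulr_ge0 ?powR_ge0.
apply: (@le_trans _ _ (\int[mu]_x (e1 x + e2 x + e3 x))%E).
  apply: ge0_le_integral => //.
  - apply/measurable_EFinP/mpow/measurableT_comp => //.
    exact: measurable_funB mf measurable_band_quantization.
  - by apply: emeasurable_funD => //; exact: emeasurable_funD.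
  - by move=> x _; rewrite -!EFinD lee_fin band_quantization_error_powR.
rewrite ge0_integralD //; last 2 first.
- by move=> x _; rewrite adde_ge0 ?n1 ?n2.
- exact: emeasurable_funD.
rewrite ge0_integralD //.
have -> : (\int[mu]_x e1 x = ((eta / delta) `^ p)%:E * \int[mu]_x (g x `^ p)%:E)%E.
  rewrite -ge0_integralZl_EFin ?powR_ge0 //.
  - by move=> x _; rewrite lee_fin powR_ge0.
  - exact/measurable_EFinP/mpow.
have -> : (\int[mu]_x e2 x = \int[mu]_(x in U) (`|f x| `^ p)%:E)%E.
  rewrite [RHS]integral_mkcond; apply: eq_integral => x _.
  by rewrite /e2 /patch indicE; case: (x \in U); rewrite ?mulr1 ?mulr0.
by [].
Qed.

End band_quantization.

Lemma exists_powR_scale_le {R : realType} (p gam : R) (I : \bar R) :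
  0 < p -> 0 < gam -> (0 <= I)%E -> I \is a fin_num ->
  exists2 t : R, 0 < t & ((t `^ p)%:E * I <= gam%:E)%E.
Proof.
move=> p0 gam0; case: I => [G||] //; rewrite lee_fin => G0 _.
have G1 : 0 < G + 1 by rewrite ltr_wpDl.
exists ((gam / (G + 1)) `^ p^-1); first by rewrite powR_gt0 // divr_gt0.
rewrite -powRrM mulVf ?gt_eqF // powRr1 ?divr_ge0 ?(ltW gam0) ?(ltW G1) //.
by rewrite -EFinM lee_fin mulrAC ler_pdivrMr // ler_pM2l // lerDl.
Qed.

Theorem proposition4p1 (d : measure_display) (T : measurableType d) (R : realType)
  (mu : {measure set T -> \bar R}) (p : R) (A : set (T -> R)) :
  mu [set: T] != 0%E ->
  1 <= p ->
  (forall f, A f -> f \in Lfun mu p%:E) ->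
  uniformly_integrable mu p A ->
  uniformly_approximable mu p A.
Proof.
(* The construction does not need [mu [set: T] != 0]. *)
move=> _ p1 AL UI eps eps0; have p0 : 0 < p by rewrite (lt_le_trans ltr01).
pose gam := eps `^ p / 4; have gam0 : 0 < gam by rewrite divr_gt0 ?powR_gt0.
have [g gLp gUI] := uniformly_integrable_gauge mu p A gam UI gam0.
have [gL g0] := gLp; have mg := measurable_Lfun mu gL.
have [n tail] := integral_off_band_small mu p g gam p1 gam0 gLp.
have [t t0 small] : exists2 t, 0 < t &
    ((t `^ p)%:E * \int[mu]_x (g x `^ p)%:E <= gam%:E)%E.
  apply: exists_powR_scale_le => //.
    by apply: integral_ge0 => x _; rewrite lee_fin powR_ge0.
  exact/integrable_fin_num/integrable_Lp_plus_powR.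
pose delta : R := n.+1%:R^-1; pose M : R := n.+1%:R; pose eta := delta * t.
have delta0 : 0 < delta by rewrite invr_gt0.
have eta0 : 0 < eta by rewrite mulr_gt0.
pose N := Num.truncn (M / eta).
have MN : M / eta < N.+1%:R := Num.Theory.real_truncnS_gt (num_real _).
exists (size (grid eta N)); split; first by rewrite size_grid.
move=> f Af; have mf := measurable_Lfun mu (AL f Af).
exists (band_quantization g f delta M eta); split; first exact: G_pk_band_quantization.
apply: Lnorm_le_powR (ltW eps0) _ => //.
apply: le_trans (integral_band_quantization_error mu p g f delta M eta
  p0 delta0 eta0 g0 mg mf) _.
rewrite [eta / delta]mulrAC divff ?gt_eqF // mul1r.
apply: (@le_trans _ _ (gam%:E + gam%:E + gam%:E)%E).
  by rewrite leeD ?(ltW tail) // leeD ?(gUI f Af).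
by rewrite -!EFinD lee_fin /gam; have := powR_ge0 eps p; lra.
Qed.
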